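(* Let ${\bm X}={\bm Y}$ be a finite set, let $m^{\bm X}_\bullet,m^{\bm Y}_\bullet$ be irreducible and aperiodic Markov transition kernels on it, and let the cost matrix $C$ be a pseudometric on ${\bm X}$. Define $C^{(0)}=C$ and $C^{(l)}_{ij}=d_{\mathrm W}(m^{\bm X}_i,m^{\bm Y}_j;C^{(l-1)})$ for $l\ge1$. Then $(C^{(k)})_{k\in\mathbb{N}}$ converges to a constant matrix.
   Context: For probability measures $\alpha,\beta$ on finite sets and cost $D$, $d_{\mathrm W}(\alpha,\beta;D)=\inf_{(X,Y)\in\mathcal{C}(\alpha,\beta)}\mathbb{E}\,D(X,Y)$, where $\mathcal{C}(\alpha,\beta)$ is the set of couplings of $\alpha,\beta$. $m^{\bm X}_i$ denotes the transition distribution from state $i$. *)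

From HB Require Import structures.
From mathcomp Require Import all_boot all_order all_algebra.
From mathcomp Require Import all_classical all_reals all_analysis.
Set Implicit Arguments. Unset Strict Implicit. Unset Printing Implicit Defensive.
Import Order.TTheory GRing.Theory Num.Theory.
Local Open Scope ring_scope.
Local Open Scope classical_set_scope.

Section Defs.
Variables (R : realType) (T : finType).

Definition is_prob (a : T -> R) : Prop :=
  (forall x, 0 <= a x) /\ \sum_x a x = 1.

Definition is_markov_kernel (m : T -> T -> R) : Prop :=
  forall i, is_prob (m i).

Fixpoint kpow (m : T -> T -> R) (n : nat) : T -> T -> R :=
  match n with
  | 0 => fun i j => (i == j)%:R
  | n'.+1 => fun i j => \sum_k m i k * kpow m n' k j
  end.

Definition irreducible (m : T -> T -> R) : Prop :=
  forall i j, exists n : nat, 0 < kpow m n i j.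

(* the period of every state (gcd of its return times) is 1 *)
Definition aperiodic (m : T -> T -> R) : Prop :=
  forall i (d : nat),
    (forall n : nat, (0 < n)%N -> 0 < kpow m n i i -> (d %| n)%N) -> d = 1%N.

Definition is_pseudometric (D : T -> T -> R) : Prop :=
  [/\ forall x, D x x = 0,
      forall x y, D x y = D y x &
      forall x y z, D x z <= D x y + D y z].

Definition is_coupling (a b : T -> R) (P : T -> T -> R) : Prop :=
  [/\ forall x y, 0 <= P x y,
      forall x, \sum_y P x y = a x &
      forall y, \sum_x P x y = b y].

Definition dW (a b : T -> R) (D : T -> T -> R) : R :=
  inf [set v : R | exists P, is_coupling a b P /\
                   v = \sum_x \sum_y P x y * D x y].

Fixpoint Citer (mX mY : T -> T -> R) (C : T -> T -> R) (l : nat) : T -> T -> R :=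
  match l with
  | 0 => C
  | l'.+1 => fun i j => dW (mX i) (mY j) (Citer mX mY C l')
  end.
End Defs.

From HB Require Import structures.
From mathcomp Require Import all_boot all_order all_algebra.
From mathcomp Require Import all_classical all_reals all_analysis.
From mathcomp Require Import ring lra.
Set Implicit Arguments.
Unset Strict Implicit.
Unset Printing Implicit Defensive.
Import Order.TTheory GRing.Theory Num.Theory numFieldNormedType.Exports.
Local Open Scope ring_scope.
Local Open Scope classical_set_scope.

(* Every coupling gives [d_W(a, b; D) >= min D], and the independent coupling
   gives [d_W(a, b; D) <= E_{a x b} D <= max D]; so [min C^(k)] increases and
   [max C^(k)] decreases. Unfolding the independent-coupling bound [s] times
   bounds [C^(k+s)_ij] by the mean of [C^(k)] under the [s]-step laws of two
   independent chains from [i] and [j]. For irreducible aperiodic kernels and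
   large [s] these laws charge every pair of states with mass at least some
   [th > 0], so [max - min] shrinks by the factor [1 - th] every [s] steps, the
   two monotone bounds share a limit, and every entry is squeezed to it. *)

Section NatSubmonoid.
Local Open Scope nat_scope.
Variable A : pred nat.
Hypotheses (A0 : A 0) (AD : forall m n, A m -> A n -> A (m + n)).
Hypothesis A_gcd1 : forall d, (forall n, A n -> d %| n) -> d = 1.

Lemma submonoidMn k n : A n -> A (k * n).
Proof. by move=> An; elim: k => [|k IH]; rewrite ?mul0n // mulSn AD. Qed.

(* If [Q] and [Q + d] lie in [A] and [d] does not divide some [n] in [A], then
   [q Q + n = q (Q + d) + r] with [n = q d + r], so [A] contains a smaller
   positive gap [r]. *)
Lemma submonoid_consecutive : exists Q, A Q /\ A Q.+1.
Proof.
suff gap_ind d : 0 < d -> (exists Q, A Q /\ A (Q + d)) -> exists Q, A Q /\ A Q.+1.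
  have [n An n_gt0] : exists2 n, A n & 0 < n.
    apply: contrapT => noA; suff : 0 = 1 by []; apply: A_gcd1 => n An.
    rewrite dvd0n; apply: contrapT => n_neq0.
    by apply: noA; exists n; rewrite // lt0n; apply/negP.
  by apply: (gap_ind n) => //; exists 0; rewrite add0n.
elim/ltn_ind: d => d IH d_gt0 [Q [AQ AQd]].
have [d1|d_neq1] := eqVneq d 1; first by exists Q; rewrite -addn1 -d1.
have [n An ndvd] : exists2 n, A n & ~~ (d %| n).
  apply: contrapT => noA; move/eqP: d_neq1; apply; apply: A_gcd1 => n An.
  by apply: contrapT => /negP ndvd; apply: noA; exists n.
apply: (IH (n %% d)); [exact: ltn_pmod | by rewrite lt0n |].
exists (n %/ d * (Q + d)); split; first exact: submonoidMn.
by rewrite mulnDr -addnA -divn_eq AD // submonoidMn.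
Qed.

Lemma submonoid_cofinite : exists N, forall n, N <= n -> A n.
Proof.
have [Q [AQ AQ1]] := submonoid_consecutive; exists (Q * Q) => n le_QQ_n.
have -> : n = (n %/ Q - n %% Q) * Q + n %% Q * Q.+1.
  have [->|Q_gt0] := posnP Q; first by rewrite modn0 !muln0 muln1.
  have le_mod_div : n %% Q <= n %/ Q.
    by rewrite (leq_trans (ltnW (ltn_pmod n Q_gt0))) // leq_divRL.
  by rewrite mulnSr addnA -mulnDl subnK // -divn_eq.
by rewrite AD // submonoidMn.
Qed.

End NatSubmonoid.

Section MonotoneGap.
Variable R : realType.

Lemma monotone_gap_cvg (m M : R ^nat) (s : nat) (q : R) :
  nondecreasing_seq m -> nonincreasing_seq M -> (forall k, m k <= M k) ->
  q < 1 -> (forall k, M (k + s)%N - m (k + s)%N <= q * (M k - m k)) ->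
  exists c : R, m @ \oo --> c /\ M @ \oo --> c.
Proof.
move=> m_nd M_ni le_mM q_lt1 gap_contr.
have m_cvg : m @ \oo --> sup (range m).
  apply: nondecreasing_cvgn => //; exists (M 0%N) => _ [k _ <-].
  exact: le_trans (le_mM k) (M_ni _ _ (leq0n k)).
have M_cvg : M @ \oo --> inf (range M).
  apply: nonincreasing_cvgn => //; exists (m 0%N) => _ [k _ <-].
  exact: le_trans (m_nd _ _ (leq0n k)) (le_mM k).
set a := sup _ in m_cvg; set b := inf _ in M_cvg.
have le_ab : a <= b by apply: ler_cvg_to m_cvg M_cvg _; apply: nearW.
have gap_cvg : (fun k => M k - m k) @ \oo --> b - a by apply: cvgB.
have : b - a <= q * (b - a).
  have shift_cvg : (fun k => M (k + s)%N - m (k + s)%N) @ \oo --> b - a.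
    by rewrite (cvg_shiftn s (fun k => M k - m k)).
  by apply: (ler_cvg_to shift_cvg (cvgM (cvg_cst q) gap_cvg)); apply: nearW.
exists a; split => //; suff -> : a = b by [].
apply/eqP; rewrite eq_le le_ab /=; nra.
Qed.

End MonotoneGap.

Section KernelPowers.
Variables (R : realType) (T : finType) (m : T -> T -> R).

Lemma kpowD a b i j :
  kpow m (a + b) i j = \sum_k kpow m a i k * kpow m b k j.
Proof.
elim: a i => [|a IH] i /=.
  rewrite (bigD1 i) //= eqxx mul1r big1 ?addr0 // => k /negbTE.
  by rewrite eq_sym => ->; rewrite mul0r.
under eq_bigr => k _ do rewrite IH mulr_sumr.
rewrite exchange_big /=; apply: eq_bigr => l _.
by rewrite mulr_suml; apply: eq_bigr => k _; rewrite mulrA.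
Qed.

Hypothesis m_kernel : is_markov_kernel m.

Lemma kpow_ge0 n i j : 0 <= kpow m n i j.
Proof.
elim: n i j => [|n IH] i j /=; first by rewrite ler0n.
by apply: sumr_ge0 => k _; apply: mulr_ge0; [case: (m_kernel i) | exact: IH].
Qed.

Lemma kpow_prob n i : is_prob (kpow m n i).
Proof.
split=> [j|]; first exact: kpow_ge0.
elim: n i => [|n IH] i /=.
  rewrite (bigD1 i) //= eqxx big1 ?addr0 // => k /negbTE.
  by rewrite eq_sym => ->.
rewrite exchange_big /=.
under eq_bigr => k _ do rewrite -mulr_sumr IH mulr1.
by case: (m_kernel i).
Qed.

Lemma kpowD_gt0 a b i k j :
  0 < kpow m a i k -> 0 < kpow m b k j -> 0 < kpow m (a + b) i j.
Proof.
move=> Ha Hb; rewrite kpowD (bigD1 k) //=.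
apply: ltr_wpDr; last exact: mulr_gt0.
by apply: sumr_ge0 => l _; apply: mulr_ge0; exact: kpow_ge0.
Qed.

Lemma return_times_cofinite i : aperiodic m ->
  \forall n \near \oo, 0 < kpow m n i i.
Proof.
move=> m_aper.
have [|||N HN] := @submonoid_cofinite (fun n => 0 < kpow m n i i).
- by rewrite /= eqxx ltr01.
- by move=> a b; apply: kpowD_gt0.
- by move=> d d_dvd; apply: (m_aper i) => n _; apply: d_dvd.
by exists N.
Qed.

Lemma irreducible_aperiodic_primitive : irreducible m -> aperiodic m ->
  \forall n \near \oo, forall i j, 0 < kpow m n i j.
Proof.
move=> m_irr m_aper; apply: filter_forall => i; apply: filter_forall => j.
have [r r_pos] := m_irr i j; have [N _ HN] := return_times_cofinite i m_aper.
exists (N + r)%N => // n /= le_n.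
have le_rn : (r <= n)%N by apply: leq_trans le_n; apply: leq_addl.
rewrite -(subnK le_rn); apply: kpowD_gt0 r_pos; apply: HN.
by rewrite /= leq_subRL // addnC.
Qed.

End KernelPowers.

Section ProductExpectation.
Variables (R : realType) (T : finType).
Implicit Types (a b : T -> R) (E F : T -> T -> R).

Definition expect_prod a b E : R := \sum_x \sum_y a x * b y * E x y.

Lemma prod_coupling a b : is_prob a -> is_prob b ->
  is_coupling a b (fun x y => a x * b y).
Proof.
move=> [a_ge0 a_sum1] [b_ge0 b_sum1]; split.
- by move=> x y; apply: mulr_ge0.
- by move=> x; rewrite -mulr_sumr b_sum1 mulr1.
- by move=> y; rewrite -mulr_suml a_sum1 mul1r.
Qed.

Lemma coupling_cost_ge a b E P l : is_prob a -> is_coupling a b P ->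
  (forall x y, l <= E x y) -> l <= \sum_x \sum_y P x y * E x y.
Proof.
move=> [_ a_sum1] [P_ge0 P_marg _] l_le.
rewrite -[l]mul1r -a_sum1 mulr_suml; apply: ler_sum => x _.
rewrite -P_marg mulr_suml; apply: ler_sum => y _.
exact: ler_wpM2l.
Qed.

Lemma matrix_lbound E : exists l, forall x y, l <= E x y.
Proof.
exists (- \sum_(p : T * T) `|E p.1 p.2|) => x y; apply: lerNnormlW.
rewrite (bigD1 (x, y)) //= lerDl.
by apply: sumr_ge0 => p _; apply: normr_ge0.
Qed.

Lemma dW_le_expect_prod a b E : is_prob a -> is_prob b ->
  dW a b E <= expect_prod a b E.
Proof.
move=> a_prob b_prob; apply: ge_inf; last first.
  by exists (fun x y => a x * b y); split => //; apply: prod_coupling.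
have [l l_le] := matrix_lbound E; exists l => _ [P [P_coupling ->]].
exact: coupling_cost_ge P_coupling l_le.
Qed.

Lemma dW_ge a b E l : is_prob a -> is_prob b ->
  (forall x y, l <= E x y) -> l <= dW a b E.
Proof.
move=> a_prob b_prob l_le; apply: lb_le_inf.
  exists (expect_prod a b E), (fun x y => a x * b y).
  by split => //; apply: prod_coupling.
by move=> _ [P [P_coupling ->]]; exact: coupling_cost_ge P_coupling l_le.
Qed.

Lemma expect_prodB a b E F :
  expect_prod a b (fun x y => E x y - F x y) = expect_prod a b E - expect_prod a b F.
Proof.
rewrite /expect_prod -sumrB; apply: eq_bigr => x _.
by rewrite -sumrB; apply: eq_bigr => y _; rewrite mulrBr.
Qed.

Lemma expect_prod_cst a b u : is_prob a -> is_prob b ->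
  expect_prod a b (fun _ _ => u) = u.
Proof.
move=> [_ a_sum1] [_ b_sum1].
rewrite /expect_prod -[RHS]mul1r -a_sum1 mulr_suml; apply: eq_bigr => x _.
by rewrite -mulr_suml -mulr_sumr b_sum1 mulr1.
Qed.

Lemma ler_expect_prod a b E F : is_prob a -> is_prob b ->
  (forall x y, E x y <= F x y) -> expect_prod a b E <= expect_prod a b F.
Proof.
move=> [a_ge0 _] [b_ge0 _] le_EF.
apply: ler_sum => x _; apply: ler_sum => y _.
by apply: ler_wpM2l => //; apply: mulr_ge0.
Qed.

Lemma expect_prod_le a b E u : is_prob a -> is_prob b ->
  (forall x y, E x y <= u) -> expect_prod a b E <= u.
Proof.
move=> a_prob b_prob le_Eu; rewrite -(expect_prod_cst u a_prob b_prob).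
exact: ler_expect_prod.
Qed.

Lemma expect_prod_contract a b E u x0 y0 th : is_prob a -> is_prob b ->
  (forall x y, E x y <= u) -> th <= a x0 * b y0 ->
  expect_prod a b E <= u + th * (E x0 y0 - u).
Proof.
move=> a_prob b_prob le_Eu le_th.
have ab_ge0 x y : 0 <= a x * b y by apply: mulr_ge0; [case: a_prob | case: b_prob].
have term_le : a x0 * b y0 * (u - E x0 y0) <= expect_prod a b (fun x y => u - E x y).
  rewrite /expect_prod (bigD1 x0) //= (bigD1 y0) //= -addrA lerDl.
  apply: addr_ge0; apply: sumr_ge0 => x _; last apply: sumr_ge0 => y _;
    by apply: mulr_ge0; rewrite ?subr_ge0.
rewrite expect_prodB expect_prod_cst // in term_le.
have : th * (u - E x0 y0) <= a x0 * b y0 * (u - E x0 y0).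
  by apply: ler_wpM2r; rewrite ?subr_ge0.
lra.
Qed.

Lemma expect_prod_kpow0 (mX mY E : T -> T -> R) i j :
  expect_prod (kpow mX 0 i) (kpow mY 0 j) E = E i j.
Proof.
rewrite /expect_prod (bigD1 i) //= (bigD1 j) //= !eqxx !mul1r.
rewrite big1 ?addr0 => [|y /negbTE]; last by rewrite eq_sym => ->; rewrite mulr0 mul0r.
rewrite big1 ?addr0 // => x /negbTE; rewrite eq_sym => ->.
by rewrite big1 // => y _; rewrite !mul0r.
Qed.

Lemma expect_prod_kpowS (mX mY E : T -> T -> R) n i j :
  expect_prod (kpow mX n.+1 i) (kpow mY n.+1 j) E =
  expect_prod (mX i) (mY j) (fun x y => expect_prod (kpow mX n x) (kpow mY n y) E).
Proof.
rewrite /expect_prod /=.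
under [RHS]eq_bigr => x _ do under eq_bigr => y _ do rewrite mulr_sumr.
under [RHS]eq_bigr => x _ do under eq_bigr => y _ do under eq_bigr => x' _ do
  rewrite mulr_sumr.
have exchange4 (F : T -> T -> T -> T -> R) :
    \sum_x \sum_y \sum_x' \sum_y' F x y x' y' =
    \sum_x' \sum_y' \sum_x \sum_y F x y x' y'.
  under eq_bigr => x _ do rewrite exchange_big /=.
  rewrite exchange_big /=; apply: eq_bigr => x' _.
  by under eq_bigr => y _ do rewrite exchange_big /=; rewrite exchange_big.
rewrite exchange4; apply: eq_bigr => x' _; apply: eq_bigr => y' _.
rewrite !mulr_suml; apply: eq_bigr => x _.
rewrite mulr_sumr mulr_suml; apply: eq_bigr => y _.
ring.
Qed.

End ProductExpectation.

Lemma fin_pos_lbound (R : realType) (U : finType) (f : U -> R) :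
  (forall u, 0 < f u) -> exists2 e, 0 < e & forall u, e <= f u.
Proof.
move=> f_gt0; have [u0 _ | U0] := pickP (@predT U); last first.
  by exists 1 => // u; have := U0 u.
exists (f [arg min_(u < u0) f u]%O); first exact: f_gt0.
by case: Order.TotalTheory.arg_minP => // v _ v_min u; apply: v_min.
Qed.

Section WassersteinIterates.
Variables (R : realType) (T : finType) (mX mY C : T -> T -> R).
Hypotheses (mX_kernel : is_markov_kernel mX) (mY_kernel : is_markov_kernel mY).
Local Notation D := (Citer mX mY C).

Lemma Citer_le_expect_prod s k i j :
  D (s + k) i j <= expect_prod (kpow mX s i) (kpow mY s j) (D k).
Proof.
elim: s i j => [|s IH] i j; first by rewrite expect_prod_kpow0.
rewrite expect_prod_kpowS.
apply: le_trans (dW_le_expect_prod _ (mX_kernel i) (mY_kernel j)) _.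
exact: ler_expect_prod (mX_kernel i) (mY_kernel j) IH.
Qed.

Lemma Citer_succ_le k u : (forall x y, D k x y <= u) -> forall i j, D k.+1 i j <= u.
Proof.
move=> le_u i j; apply: le_trans (dW_le_expect_prod _ (mX_kernel i) (mY_kernel j)) _.
exact: expect_prod_le.
Qed.

Lemma Citer_succ_ge k l : (forall x y, l <= D k x y) -> forall i j, l <= D k.+1 i j.
Proof. by move=> ge_l i j; apply: dW_ge. Qed.

Variable x0 : T.
Let argmaxD k := [arg max_(p > (x0, x0)) D k p.1 p.2]%O.
Let argminD k := [arg min_(p < (x0, x0)) D k p.1 p.2]%O.
Definition Citer_max k := D k (argmaxD k).1 (argmaxD k).2.
Definition Citer_min k := D k (argminD k).1 (argminD k).2.

Lemma Citer_le_max k x y : D k x y <= Citer_max k.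
Proof.
rewrite /Citer_max /argmaxD.
by case: Order.TotalTheory.arg_maxP => // p _ /(_ (x, y)); apply.
Qed.

Lemma Citer_min_le k x y : Citer_min k <= D k x y.
Proof.
rewrite /Citer_min /argminD.
by case: Order.TotalTheory.arg_minP => // p _ /(_ (x, y)); apply.
Qed.

Lemma Citer_min_le_max k : Citer_min k <= Citer_max k.
Proof. exact: le_trans (Citer_min_le k x0 x0) (Citer_le_max k x0 x0). Qed.

Lemma Citer_max_nonincreasing : nonincreasing_seq Citer_max.
Proof.
apply/nonincreasing_seqP => k; rewrite {1}/Citer_max.
exact: Citer_succ_le (Citer_le_max k) _ _.
Qed.

Lemma Citer_min_nondecreasing : nondecreasing_seq Citer_min.
Proof.
apply/nondecreasing_seqP => k; rewrite {2}/Citer_min.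
exact: Citer_succ_ge (Citer_min_le k) _ _.
Qed.

Lemma Citer_gap_contract s th :
  (forall i j x y, th <= kpow mX s i x * kpow mY s j y) -> forall k,
  Citer_max (k + s) - Citer_min (k + s) <= (1 - th) * (Citer_max k - Citer_min k).
Proof.
move=> th_le k.
have max_le : Citer_max (k + s) <= Citer_max k + th * (Citer_min k - Citer_max k).
  rewrite {1}/Citer_max addnC; apply: le_trans (Citer_le_expect_prod _ _ _ _) _.
  exact: expect_prod_contract (kpow_prob mX_kernel _ _) (kpow_prob mY_kernel _ _)
    (Citer_le_max k) (th_le _ _ _ _).
have := Citer_min_nondecreasing (leq_addr s k).
lra.
Qed.

End WassersteinIterates.

Theorem proposition26 (R : realType) (T : finType) (mX mY C : T -> T -> R) :
  is_markov_kernel mX -> is_markov_kernel mY ->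
  irreducible mX -> aperiodic mX ->
  irreducible mY -> aperiodic mY ->
  is_pseudometric C ->
  exists c : R, forall i j : T,
    (fun k : nat => Citer mX mY C k i j) @ \oo --> (c : R).
Proof.
move=> mX_kernel mY_kernel mX_irr mX_aper mY_irr mY_aper _.
have [x0 _ | T0] := pickP (@predT T); last by exists 0 => i; have := T0 i.
have [s _ /(_ s (leqnn s)) [sX_pos sY_pos]] := filterI
  (irreducible_aperiodic_primitive mX_kernel mX_irr mX_aper)
  (irreducible_aperiodic_primitive mY_kernel mY_irr mY_aper).
have [th th_gt0 th_le] := fin_pos_lbound
  (f := fun p : (T * T) * (T * T) => kpow mX s p.1.1 p.1.2 * kpow mY s p.2.1 p.2.2)
  (fun p => mulr_gt0 (sX_pos _ _) (sY_pos _ _)).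
have q_lt1 : 1 - th < 1 by rewrite gtrDl oppr_lt0.
have [c [min_cvg max_cvg]] := monotone_gap_cvg
  (Citer_min_nondecreasing C mX_kernel mY_kernel x0)
  (Citer_max_nonincreasing C mX_kernel mY_kernel x0)
  (Citer_min_le_max mX mY C x0) q_lt1
  (Citer_gap_contract C mX_kernel mY_kernel x0 (fun i j x y => th_le ((i, x), (j, y)))).
exists c => i j; apply: squeeze_cvgr min_cvg max_cvg.
by apply: nearW => k; rewrite Citer_min_le Citer_le_max.
Qed.
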